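(* Consider the measurement scenario with observables $\mathcal{X} = \{x_1, x_2, x_3\}$, contexts $\mathcal{M} = \{\{x_1, x_2\}, \{x_2, x_3\}, \{x_1, x_3\}\}$ and outcomes $\mathcal{O} = \{0,1\}$. Up to relabelling, the only strongly contextual (possibilistic) empirical model on this scenario is the one in which perfect correlation is observed on two of the contexts and perfect anti-correlation is observed on the remaining context; i.e. (up to relabelling) the supports are $\{(0,0),(1,1)\}$ on $\{x_1,x_2\}$ and on $\{x_2,x_3\}$, and $\{(0,1),(1,0)\}$ on $\{x_3,x_1\}$ (listing outcomes of $x_3$ then $x_1$).
   Context: An empirical model on a measurement scenario $\langle \mathcal{X}, \mathcal{M}, \mathcal{O}\rangle$ is a compatible family $\{D_C\}_{C\in\mathcal{M}}$ of distributions $D_C$ on $\mathcal{O}^C$ (marginals on overlaps of contexts agree). Its possibilistic collapse replaces each $D_C$ by its support $S_C = \{s \in \mathcal{O}^C : D_C(s) > 0\}$ (possible joint outcomes); a possibilistic empirical model is such a compatible family of nonempty supports. A local section $s \in S_C$ extends to a global section if there is an assignment $g : \mathcal{X} \to \mathcal{O}$ with $g|_C = s$ and $g|_{C'} \in S_{C'}$ for every $C' \in \mathcal{M}$. The model is strongly contextual if no local section (in any context) extends to a global section, equivalently there is no assignment $g:\mathcal{X}\to\mathcal{O}$ with $g|_C \in S_C$ for all $C \in \mathcal{M}$. Perfect correlation on a context $\{x_i,x_j\}$ means the support is $\{(0,0),(1,1)\}$; perfect anti-correlation means the support is $\{(0,1),(1,0)\}$. Relabelling means permuting observables and permuting the outcomes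 of individual observables. *)

From mathcomp Require Import all_boot all_fingroup.
Set Implicit Arguments. Unset Strict Implicit. Unset Printing Implicit Defensive.

(* Observables x1,x2,x3 are the ordinals 0,1,2 of 'I_3; outcomes O = bool
   (false = 0, true = 1). *)
Definition obs := 'I_3.
Definition x1 : obs := @Ordinal 3 0 isT.
Definition x2 : obs := @Ordinal 3 1 isT.
Definition x3 : obs := @Ordinal 3 2 isT.

Definition assignment := {ffun obs -> bool}.

Definition contexts : {set {set obs}} :=
  [set [set x1; x2]; [set x2; x3]; [set x1; x3]].

(* A section s in O^C is encoded canonically as an assignment that is
   [false] outside C; [restr C g] is the restriction g|_C. *)
Definition restr (C : {set obs}) (g : assignment) : assignment :=
  [ffun x => (x \in C) && g x].

Definition section_on (C : {set obs}) (s : assignment) : bool :=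
  restr C s == s.

Definition pmodel := {set obs} -> {set assignment}.

Definition possibilistic_model (S : pmodel) : Prop :=
  [/\ forall C, C \in contexts -> S C != set0,
      forall C s, C \in contexts -> s \in S C -> section_on C s
    & forall C D, C \in contexts -> D \in contexts ->
        [set restr (C :&: D) s | s in S C] = [set restr (C :&: D) s | s in S D]].

Definition strongly_contextual (S : pmodel) : Prop :=
  ~ exists g : assignment, forall C, C \in contexts -> restr C g \in S C.

(* Relabelling: permute observables by sigma and permute the outcomes of
   each (original) observable x by the bool permutation  b |-> b (+) f x
   (the two permutations of {0,1} are id and negation). *)
Definition relabel (sigma : {perm obs}) (f : {ffun obs -> bool}) (S : pmodel)
  : pmodel :=
  fun C' => [set [ffun y => (y \in C') && (s ((sigma^-1)%g y) (+) f ((sigma^-1)%g y))]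
            | s : assignment in S (sigma @^-1: C')].

Definition target_rel (C : {set obs}) (g : assignment) : bool :=
  if C == [set x1; x2] then g x1 == g x2
  else if C == [set x2; x3] then g x2 == g x3
  else g x3 != g x1.

Definition target : pmodel :=
  fun C => [set restr C g | g in [pred g | target_rel C g]].

From mathcomp Require Import all_boot all_fingroup.
Set Implicit Arguments. Unset Strict Implicit. Unset Printing Implicit Defensive.

(* Read the three supports as relations between outcomes, oriented around the
   cycle x1 -> x2 -> x3 -> x1.  Compatibility says that an outcome used by one
   relation at a vertex is used by the other relation there, and strong
   contextuality says that no triple of outcomes closes the cycle.  If some
   outcome a were related to both b and ~~ b, going around the cycle backwards
   from a would close it through one of them; going backwards from a used
   outcome a0 must likewise reach ~~ a0.  Hence every relation is the graph of
   a bijection b = a (+) p of bool, and the cycle stays open exactly when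
   p (+) q (+) r = 1; flipping the outcomes of x2 by p and of x3 by p (+) q
   turns the model into the target. *)

(* [P], [Q], [R] relate outcomes of x1 to x2, x2 to x3 and x3 to x1.  Only one
   half of each compatibility condition is assumed; the definition is then
   invariant under rotation of the cycle. *)
Definition contextual_triangle (P Q R : rel bool) : Prop :=
  [/\ forall b c, Q b c -> exists a, P a b,
      forall c a, R c a -> exists b, Q b c,
      forall a b, P a b -> exists c, R c a,
      exists a b, P a b
    & forall a b c, P a b -> Q b c -> R c a -> False].

Lemma contextual_triangle_rot P Q R :
  contextual_triangle P Q R -> contextual_triangle Q R P.
Proof.
case=> QP RQ PR [a0 [b0 P0]] nocycle; split=> // [|b c a Qbc Rca Pab].
- have [c Rc] := PR a0 b0 P0; have [b Qbc] := RQ c a0 Rc.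
  by exists b, c.
- exact: nocycle Pab Qbc Rca.
Qed.

Lemma triangle_uniq P Q R a b :
  contextual_triangle P Q R -> P a b -> ~~ P a (~~ b).
Proof.
case=> _ RQ PR _ nocycle Pab; apply/negP => Pab'.
have [c Rca] := PR a b Pab; have [b' Qb'c] := RQ c a Rca.
have [Eb'|Eb'] : b' = b \/ b' = ~~ b by case: b b' {Pab Pab' Qb'c} => [] []; auto.
all: by apply: (nocycle a b' c); rewrite // Eb'.
Qed.

Lemma triangle_total P Q R a :
  contextual_triangle P Q R -> exists b, P a b.
Proof.
case=> QP RQ PR [a0 [b0 P0]] nocycle.
have [c Rc] := PR _ _ P0; have [b1 Qb1] := RQ _ _ Rc; have [a1 Pa1] := QP _ _ Qb1.
have [Ea1|Ea1] : a1 = a0 \/ a1 = ~~ a0 by case: a1 a0 {P0 Rc Pa1} => [] []; auto.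
  by subst a1; case: (nocycle a0 b1 c).
have [-> | ->] : a = a0 \/ a = ~~ a0 by case: a a0 {P0 Rc Pa1 Ea1} => [] []; auto.
  by exists b0.
by exists b1; rewrite -Ea1.
Qed.

Lemma triangle_surj P Q R b :
  contextual_triangle P Q R -> exists a, P a b.
Proof.
move=> tri; have [QP _ _ _ _] := tri.
have [c Qbc] := triangle_total b (contextual_triangle_rot tri).
exact: QP Qbc.
Qed.

Lemma rel_bool_addb (P : rel bool) :
  (forall a, exists b, P a b) -> (forall b, exists a, P a b) ->
  (forall a b, P a b -> ~~ P a (~~ b)) ->
  exists p, forall a b, P a b = (b == a (+) p).
Proof.
move=> total surj uniq.
have graph a b0 : P a b0 -> forall b, P a b = (b == b0).
  move=> Pb0 b; apply/idP/eqP => [Pb|->//].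
  by case: b b0 Pb Pb0 (uniq a b0 Pb0) => [] [] //= ->.
have [p Pp] := total false; exists p.
have Pt : P true (~~ p).
  have [[] // Pf] := surj (~~ p).
  by move: (uniq _ _ Pp); rewrite Pf.
by case=> b; [rewrite (graph _ _ Pt) | rewrite (graph _ _ Pp)].
Qed.

Lemma triangle_addb P Q R :
  contextual_triangle P Q R -> exists p, forall a b, P a b = (b == a (+) p).
Proof.
move=> tri; apply: rel_bool_addb => [a|b|a b].
- exact: triangle_total tri.
- exact: triangle_surj tri.
- exact: triangle_uniq tri.
Qed.

Lemma contextual_triangleP P Q R : contextual_triangle P Q R ->
  exists p q r, [/\ forall a b, P a b = (b == a (+) p),
                    forall b c, Q b c = (c == b (+) q),
                    forall c a, R c a = (a == c (+) r)
                  & p (+) q (+) r].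
Proof.
move=> tri; have tri' := contextual_triangle_rot tri.
have [p Ep] := triangle_addb tri.
have [q Eq] := triangle_addb tri'.
have [r Er] := triangle_addb (contextual_triangle_rot tri').
exists p, q, r; split=> //; case: tri => _ _ _ _ nocycle.
case odd: (p (+) q (+) r) => //; case: (nocycle false p (p (+) q)).
- by rewrite Ep eqxx.
- by rewrite Eq eqxx.
- by rewrite Er odd.
Qed.

Local Notation C12 := [set x1; x2].
Local Notation C23 := [set x2; x3].
Local Notation C13 := [set x1; x3].

Lemma contextsP C : C \in contexts -> [\/ C = C12, C = C23 | C = C13].
Proof.
by rewrite /contexts !inE => /orP[/orP[]|] /eqP ->;
  [apply: Or31 | apply: Or32 | apply: Or33].
Qed.

Lemma C12_in_contexts : C12 \in contexts. Proof. by rewrite !inE eqxx. Qed.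
Lemma C23_in_contexts : C23 \in contexts. Proof. by rewrite !inE eqxx orbT. Qed.
Lemma C13_in_contexts : C13 \in contexts. Proof. by rewrite !inE eqxx !orbT. Qed.
#[local] Hint Resolve C12_in_contexts C23_in_contexts C13_in_contexts : core.

Lemma contexts_meet C D : C \in contexts -> D \in contexts -> C != D ->
  exists z, C :&: D = [set z].
Proof.
move=> /contextsP[]-> /contextsP[]->; rewrite ?eqxx // => _;
  [exists x2 | exists x1 | exists x2 | exists x3 | exists x1 | exists x3];
  by apply/setP => -[[|[|[|//]]] ?]; rewrite !inE.
Qed.

Definition assign3 (a b c : bool) : assignment :=
  [ffun x : obs => nth c [:: a; b] x].

Definition flip_outcomes (f g : assignment) : assignment :=
  [ffun x => g x (+) f x].

Lemma flip_outcomesK f : involutive (flip_outcomes f).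
Proof. by move=> g; apply/ffunP => x; rewrite !ffunE addbK. Qed.

Lemma eq_restr (C : {set obs}) (g h : assignment) :
  {in C, g =1 h} -> restr C g = restr C h.
Proof.
by move=> gh; apply/ffunP => x; rewrite !ffunE; case xC: (x \in C); rewrite //= gh.
Qed.

Lemma section_on_restr C g : section_on C (restr C g).
Proof. by apply/eqP/eq_restr => x xC; rewrite ffunE xC. Qed.

Lemma restr_flip_outcomes C f g :
  restr C (flip_outcomes f (restr C g)) = restr C (flip_outcomes f g).
Proof. by apply: eq_restr => x xC; rewrite !ffunE xC. Qed.

Lemma mem_relabel1 (S : pmodel) f C h :
  (forall s, s \in S C -> section_on C s) ->
  (h \in relabel 1 f S C) = section_on C h && (restr C (flip_outcomes f h) \in S C).
Proof.
move=> secS; rewrite /relabel; have -> : (1%g : {perm obs}) @^-1: C = C.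
  by apply/setP => x; rewrite inE perm1.
rewrite invg1 (@eq_imset _ _ _ (fun s => restr C (flip_outcomes f s))); last first.
  by move=> s; apply/ffunP => x; rewrite !ffunE perm1.
apply/imsetP/andP => [[s Ss ->]|[/eqP hC Sh]].
  by rewrite section_on_restr restr_flip_outcomes flip_outcomesK (eqP (secS s Ss)).
exists (restr C (flip_outcomes f h)) => //.
by rewrite restr_flip_outcomes flip_outcomesK.
Qed.

Definition support_rel (S : pmodel) (x y : obs) : rel bool :=
  fun a b => [exists s in S [set x; y], (s x == a) && (s y == b)].

Lemma support_rel_of (S : pmodel) x y s :
  s \in S [set x; y] -> support_rel S x y (s x) (s y).
Proof. by move=> Ss; apply/exists_inP; exists s; rewrite ?eqxx. Qed.

Section PossibilisticModel.

Variable S : pmodel.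
Hypothesis modelS : possibilistic_model S.

Lemma support_marginal C D z s : C \in contexts -> D \in contexts ->
  z \in C -> z \in D -> s \in S C -> exists2 t, t \in S D & t z = s z.
Proof.
case: modelS => _ _ compat CM DM zC zD Ss.
have /imsetP[t St ts] : restr (C :&: D) s \in [set restr (C :&: D) t | t in S D].
  by rewrite -compat //; apply: imset_f.
by exists t => //; move/ffunP/(_ z): ts; rewrite !ffunE inE zC zD.
Qed.

Lemma mem_restr_support x y g : [set x; y] \in contexts ->
  (restr [set x; y] g \in S [set x; y]) = support_rel S x y (g x) (g y).
Proof.
case: modelS => _ secS _ Cxy.
apply/idP/exists_inP => [Sg|[s Ss /andP[/eqP sx /eqP sy]]].
  by exists (restr [set x; y] g); rewrite // !ffunE set21 set22 !eqxx.
suff -> : restr [set x; y] g = s by [].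
rewrite -(eqP (secS _ _ Cxy Ss)).
by apply: eq_restr => z /set2P[]->; rewrite ?sx ?sy.
Qed.

Lemma support_triangle : strongly_contextual S ->
  contextual_triangle (support_rel S x1 x2) (support_rel S x2 x3)
                      (fun c a => support_rel S x1 x3 a c).
Proof.
case: modelS => nonempty _ _ contextual; split.
- move=> b c /exists_inP[s Ss /andP[/eqP <- _]].
  have [t St <-] :=
    support_marginal C23_in_contexts C12_in_contexts (set21 _ _) (set22 _ _) Ss.
  by exists (t x1); apply: support_rel_of.
- move=> c a /exists_inP[s Ss /andP[_ /eqP <-]].
  have [t St <-] :=
    support_marginal C13_in_contexts C23_in_contexts (set22 _ _) (set22 _ _) Ss.
  by exists (t x2); apply: support_rel_of.
- move=> a b /exists_inP[s Ss /andP[/eqP <- _]].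
  have [t St <-] :=
    support_marginal C12_in_contexts C13_in_contexts (set21 _ _) (set21 _ _) Ss.
  by exists (t x3); apply: support_rel_of.
- have /set0Pn[s Ss] := nonempty _ C12_in_contexts.
  by exists (s x1), (s x2); apply: support_rel_of.
- move=> a b c Pab Qbc Rca; apply: contextual; exists (assign3 a b c).
  by move=> C /contextsP[]->; rewrite mem_restr_support // !ffunE.
Qed.

End PossibilisticModel.

Lemma target_rel12 g : target_rel C12 g = (g x1 == g x2).
Proof. by rewrite /target_rel eqxx. Qed.

Lemma target_rel23 g : target_rel C23 g = (g x2 == g x3).
Proof.
by rewrite /target_rel ifF ?eqxx //; apply/eqP => /setP/(_ x3); rewrite !inE.
Qed.

Lemma target_rel13 g : target_rel C13 g = (g x3 != g x1).
Proof.
rewrite /target_rel !ifF //; apply/eqP.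
  by move=> /setP/(_ x1); rewrite !inE.
by move=> /setP/(_ x3); rewrite !inE.
Qed.

Definition target_relE := (target_rel12, target_rel23, target_rel13).

Lemma target_rel_restr C g :
  C \in contexts -> target_rel C (restr C g) = target_rel C g.
Proof. by case/contextsP=> ->; rewrite !target_relE !ffunE !inE. Qed.

Lemma mem_target C h : C \in contexts ->
  (h \in target C) = section_on C h && target_rel C h.
Proof.
move=> CM; apply/imsetP/andP => [[g gR ->]|[/eqP hC hR]].
  by rewrite section_on_restr target_rel_restr.
by exists h; rewrite ?inE ?hC.
Qed.

Lemma target_rel_extend C z v : C \in contexts ->
  exists g, target_rel C g && (g z == v).
Proof.
case/contextsP=> ->; try by exists [ffun=> v]; rewrite target_relE !ffunE !eqxx.
exists [ffun w => v (+) (z == x3) (+) (w == x3)].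
rewrite target_relE !ffunE addbK -[x1 == x3]/false !eqxx andbT addbT addbF.
by case: (_ (+) _).
Qed.

Lemma target_possibilistic : possibilistic_model target.
Proof.
split=> [C CM | C s CM | C D CM DM].
- have [g /andP[gR _]] := target_rel_extend x1 true CM.
  apply/set0Pn; exists (restr C g).
  by rewrite mem_target // section_on_restr target_rel_restr.
- by rewrite mem_target // => /andP[].
have sub E F : E \in contexts -> F \in contexts ->
    [set restr (E :&: F) s | s in target E]
      \subset [set restr (E :&: F) s | s in target F].
  move=> EM FM; have [<-|neq] := eqVneq E F; first exact: subxx.
  have [z EFz] := contexts_meet EM FM neq.
  have /setIP[_ zF] : z \in E :&: F by rewrite EFz set11.
  apply/subsetP => _ /imsetP[s _ ->].
  have [g /andP[gR /eqP gz]] := target_rel_extend z (s z) FM.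
  apply/imsetP; exists (restr F g).
    by rewrite mem_target // section_on_restr target_rel_restr.
  by apply: eq_restr => w; rewrite EFz => /set1P ->; rewrite ffunE zF gz.
by apply/eqP; rewrite eqEsubset sub // setIC sub.
Qed.

Lemma target_strongly_contextual : strongly_contextual target.
Proof.
case=> g inT; have tR C : C \in contexts -> target_rel C g.
  move=> CM; move: (inT C CM).
  by rewrite mem_target // target_rel_restr // => /andP[].
move: (tR _ C12_in_contexts) (tR _ C23_in_contexts) (tR _ C13_in_contexts).
by rewrite !target_relE => /eqP-> /eqP->; rewrite eqxx.
Qed.

Lemma relabel_to_target S : possibilistic_model S -> strongly_contextual S ->
  exists (sigma : {perm obs}) (f : {ffun obs -> bool}),
    forall C, C \in contexts -> relabel sigma f S C = target C.
Proof.
move=> modelS contextualS; have [_ secS _] := modelS.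
have [p [q [r [Ep Eq Er pqr]]]] :=
  contextual_triangleP (support_triangle modelS contextualS).
exists 1%g, (assign3 false p (p (+) q)) => C CM; apply/setP => h.
rewrite mem_relabel1 ?mem_target //; last by move=> s; apply: secS.
case/contextsP: CM => ->; rewrite mem_restr_support // !ffunE /= !target_relE.
all: congr (_ && _).
- by rewrite Ep addbF (inj_eq (@addIb p)) eq_sym.
- by rewrite Eq addbA (inj_eq (@addIb q)) (inj_eq (@addIb p)) eq_sym.
- by rewrite Er addbF -addbA pqr addbT; case: (h x1) (h x3) => [] [].
Qed.

Theorem mainTheorem2 :
  possibilistic_model target /\ strongly_contextual target /\
  (forall S : pmodel, possibilistic_model S -> strongly_contextual S ->
     exists (sigma : {perm obs}) (f : {ffun obs -> bool}),
       forall C, C \in contexts -> relabel sigma f S C = target C).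
Proof.
split; last split.
- exact: target_possibilistic.
- exact: target_strongly_contextual.
- exact: relabel_to_target.
Qed.
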